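(* Consider $N$ agents $$\dot x_i=\sum_{j=1}^N\alpha_{ij}(y_j-y_i),\qquad y_i=\mathrm{sat}_i(x_i),\qquad i\in\mathcal V=\{1,\dots,N\},$$ where the constant weights $\alpha_{ij}\ge0$ define a directed, strongly connected graph with Laplacian $L$, and let $p=(p_1,\dots,p_N)^T$ be the left eigenvector of $L$ for eigenvalue $0$ normalized so that $\sum_i p_i=1$ (so $p_i>0$). Assume not all $x_i(t_0)$ are equal. Then the agents achieve consensus if and only if $$\Big|\sum_{i=1}^N p_i x_i(t_0)\Big|\le\min_{i\in\mathcal V}s_i.$$
   Context: $\mathrm{sat}_i(x)=\mathrm{sign}(x)\min\{|x|,s_i\}$ with $s_i>0$. $L=\mathrm{diag}(A\mathbf 1)-A$, $A=[\alpha_{ij}]$, $\alpha_{ij}>0$ iff $(i,j)$ is an edge. Strongly connected: a directed path exists between any two distinct nodes. Consensus: there is $C$ with $\lim_{t\to\infty}x_i(t)=C$ for all $i$. *)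

From Stdlib Require Import Reals Lra Relations.
Open Scope R_scope.

Fixpoint fsum (n : nat) (f : nat -> R) : R :=
  match n with
  | O => 0
  | S m => fsum m f + f m
  end.

Definition sign (x : R) : R :=
  if Rlt_dec 0 x then 1 else if Rlt_dec x 0 then -1 else 0.

Definition sat (si x : R) : R := sign x * Rmin (Rabs x) si.

Definition edge (N : nat) (alpha : nat -> nat -> R) (i j : nat) : Prop :=
  (i < N)%nat /\ (j < N)%nat /\ alpha i j > 0.

Definition strongly_connected (N : nat) (alpha : nat -> nat -> R) : Prop :=
  forall i j, (i < N)%nat -> (j < N)%nat -> i <> j ->
    clos_trans nat (edge N alpha) i j.

Definition laplacian (N : nat) (alpha : nat -> nat -> R) (i j : nat) : R :=
  (if Nat.eq_dec i j then fsum N (fun k => alpha i k) else 0) - alpha i j.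

Definition left_null (N : nat) (alpha : nat -> nat -> R) (p : nat -> R) : Prop :=
  forall j, (j < N)%nat -> fsum N (fun i => p i * laplacian N alpha i j) = 0.

Definition is_solution (N : nat) (alpha : nat -> nat -> R) (s : nat -> R)
    (t0 : R) (x : nat -> R -> R) : Prop :=
  forall i t, (i < N)%nat -> t0 <= t ->
    derivable_pt_lim (x i) t
      (fsum N (fun j => alpha i j * (sat (s j) (x j t) - sat (s i) (x i t)))).

Definition consensus (N : nat) (x : nat -> R -> R) : Prop :=
  exists C : R, forall i, (i < N)%nat ->
    forall eps, eps > 0 -> exists T, forall t, t >= T -> Rabs (x i t - C) < eps.

(** The weighted average [c = sum_i p_i x_i] is invariant along solutions because [p] is a left
    null vector of the Laplacian.

    If [|c| <= s_i] for all [i], let [F_i] be the primitive of [sat_i]; the Bregman divergence of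
    [sum_i p_i F_i (x_i)] from the constant state [c] is a Lyapunov function, decreasing at half
    the rate [sum_ij p_i alpha_ij (y_j - y_i)^2] (the outputs [y] weighted by [p]). This rate must
    become arbitrarily small, which by strong connectivity makes all outputs, then all states,
    close to [c] at some time; coercivity of the divergence keeps them close afterwards.

    Conversely, at a consensus value [C] the outputs [sat_i C] form an equilibrium, hence are equal
    by strong connectivity, and [C = c] by invariance. If [|C| > s_i] for some [i], all outputs
    eventually freeze at this common saturated value, the states stop moving and so reach [C] in
    finite time, and backward uniqueness (Gronwall) forces the initial states to be all equal. *)

From Stdlib Require Import Reals Lra Lia Relations Classical.
Open Scope R_scope.

(** * Finite sums *)

Lemma Rabs_le_inv a b : Rabs a <= b -> - b <= a <= b.
Proof. unfold Rabs; destruct Rcase_abs; lra. Qed.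

Lemma fsum_ext n f g : (forall i, (i < n)%nat -> f i = g i) -> fsum n f = fsum n g.
Proof.
  induction n as [|n IH]; simpl; intros H; [reflexivity|].
  rewrite IH by (intros; apply H; lia). rewrite H by lia; reflexivity.
Qed.

Lemma fsum_plus n f g : fsum n (fun i => f i + g i) = fsum n f + fsum n g.
Proof. induction n; simpl; [lra|]. rewrite IHn; lra. Qed.

Lemma fsum_minus n f g : fsum n (fun i => f i - g i) = fsum n f - fsum n g.
Proof. induction n; simpl; [lra|]. rewrite IHn; lra. Qed.

Lemma fsum_mult_l n a f : fsum n (fun i => a * f i) = a * fsum n f.
Proof. induction n; simpl; [lra|]. rewrite IHn; lra. Qed.

Lemma fsum_mult_r n a f : fsum n (fun i => f i * a) = fsum n f * a.
Proof. induction n; simpl; [lra|]. rewrite IHn; lra. Qed.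

Lemma fsum_const n a : fsum n (fun _ => a) = INR n * a.
Proof. induction n; simpl fsum; [simpl; lra|]. rewrite IHn, S_INR; lra. Qed.

Lemma fsum_zero n : fsum n (fun _ => 0) = 0.
Proof. rewrite fsum_const; ring. Qed.

Lemma fsum_swap n m f :
  fsum n (fun i => fsum m (fun j => f i j)) = fsum m (fun j => fsum n (fun i => f i j)).
Proof. induction n; simpl; [rewrite fsum_zero|rewrite IHn, <- fsum_plus]; reflexivity. Qed.

Lemma fsum_delta n a j :
  (j < n)%nat -> fsum n (fun i => if Nat.eq_dec i j then a i else 0) = a j.
Proof.
  induction n; simpl; intros Hj; [lia|].
  destruct (Nat.eq_dec n j) as [->|Hne]; [|rewrite IHn by lia; lra].
  rewrite (fsum_ext j _ (fun _ => 0)), fsum_zero; [lra|].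
  intros i Hi; destruct (Nat.eq_dec i j); [lia|reflexivity].
Qed.

Lemma fsum_le n f g : (forall i, (i < n)%nat -> f i <= g i) -> fsum n f <= fsum n g.
Proof.
  induction n; simpl; intros H; [lra|].
  assert (fsum n f <= fsum n g) by (apply IHn; intros; apply H; lia).
  assert (f n <= g n) by (apply H; lia). lra.
Qed.

Lemma fsum_nonneg n f : (forall i, (i < n)%nat -> 0 <= f i) -> 0 <= fsum n f.
Proof. intros H. rewrite <- (fsum_zero n). apply fsum_le, H. Qed.

Lemma fsum_ge_term n f k :
  (forall i, (i < n)%nat -> 0 <= f i) -> (k < n)%nat -> f k <= fsum n f.
Proof.
  intros H Hk. rewrite <- (fsum_delta n f k Hk). apply fsum_le.
  intros i Hi. destruct (Nat.eq_dec i k); [lra|apply H, Hi].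
Qed.

Lemma fsum_nonneg_eq0 n f :
  (forall i, (i < n)%nat -> 0 <= f i) -> fsum n f = 0 -> forall k, (k < n)%nat -> f k = 0.
Proof. intros H Hs k Hk. pose proof (fsum_ge_term n f k H Hk). pose proof (H k Hk). lra. Qed.

Lemma fsum_abs n f : Rabs (fsum n f) <= fsum n (fun i => Rabs (f i)).
Proof.
  induction n; simpl; [rewrite Rabs_R0; lra|].
  eapply Rle_trans; [apply Rabs_triang|]. lra.
Qed.

Lemma fsum_le_add1 n f g k :
  (forall i, (i < n)%nat -> f i <= g i) -> (k < n)%nat -> f k + 1 <= g k ->
  fsum n f + 1 <= fsum n g.
Proof.
  intros H Hk Hfk.
  assert (g k - f k <= fsum n (fun i => g i - f i))
    by (apply (fsum_ge_term _ (fun i => g i - f i)); auto; intros i Hi; specialize (H i Hi); lra).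
  rewrite fsum_minus in *. lra.
Qed.

Lemma fsum_le1_eq1 n f :
  (forall i, (i < n)%nat -> f i <= 1) -> INR n <= fsum n f -> forall k, (k < n)%nat -> f k = 1.
Proof.
  intros H Hs k Hk.
  assert (Hz : fsum n (fun i => 1 - f i) = 0).
  { assert (0 <= fsum n (fun i => 1 - f i))
      by (apply fsum_nonneg; intros i Hi; specialize (H i Hi); lra).
    rewrite fsum_minus, fsum_const in *. lra. }
  assert (1 - f k = 0); [|lra].
  apply (fsum_nonneg_eq0 n (fun i => 1 - f i)); auto.
  intros i Hi; specialize (H i Hi); lra.
Qed.

Section WeightedAverage.

Variables (n : nat) (p : nat -> R).
Hypotheses (p_ge0 : forall i, (i < n)%nat -> 0 <= p i) (p_sum1 : fsum n p = 1).

Lemma fsum_weighted_le f b :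
  (forall i, (i < n)%nat -> f i <= b) -> fsum n (fun i => p i * f i) <= b.
Proof.
  intros H. apply (Rle_trans _ (fsum n (fun i => p i * b))).
  - apply fsum_le. intros i Hi. apply Rmult_le_compat_l; auto.
  - rewrite fsum_mult_r, p_sum1. lra.
Qed.

Lemma fsum_weighted_abs_le f b :
  (forall i, (i < n)%nat -> Rabs (f i) <= b) -> Rabs (fsum n (fun i => p i * f i)) <= b.
Proof.
  intros H. eapply Rle_trans; [apply fsum_abs|].
  erewrite fsum_ext; [apply (fsum_weighted_le (fun i => Rabs (f i))), H|].
  intros i Hi. rewrite Rabs_mult, Rabs_right by (apply Rle_ge, p_ge0, Hi). reflexivity.
Qed.

End WeightedAverage.

Lemma fsum_centered n p z c :
  fsum n p = 1 -> fsum n (fun i => p i * (z i - c)) = fsum n (fun i => p i * z i) - c.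
Proof.
  intros Hp. rewrite (fsum_ext _ _ (fun i => p i * z i - c * p i)) by (intros; ring).
  rewrite fsum_minus, fsum_mult_l, Hp. ring.
Qed.

Lemma fin_pos_lower_bound n (g : nat -> R) :
  exists m, 0 < m /\ forall i, (i < n)%nat -> 0 < g i -> m <= g i.
Proof.
  induction n as [|n [m [Hm H]]]; [exists 1; split; [lra|intros; lia]|].
  destruct (Rlt_le_dec 0 (g n)).
  - exists (Rmin m (g n)). split; [apply Rmin_glb_lt; auto|]. intros i Hi Hg.
    destruct (Nat.eq_dec i n) as [->|]; [apply Rmin_r|].
    eapply Rle_trans; [apply Rmin_l|apply H; auto; lia].
  - exists m. split; auto. intros i Hi Hg.
    destruct (Nat.eq_dec i n) as [->|]; [lra|apply H; auto; lia].
Qed.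

Lemma fin_pos_lower_bound2 n (g : nat -> nat -> R) :
  exists m, 0 < m /\ forall i j, (i < n)%nat -> (j < n)%nat -> 0 < g i j -> m <= g i j.
Proof.
  destruct (fin_pos_lower_bound (n * n) (fun k => g (k / n) (k mod n))%nat) as [m [Hm H]].
  exists m. split; auto. intros i j Hi Hj Hg.
  specialize (H (i * n + j)%nat).
  rewrite Nat.div_add_l, Nat.div_small, Nat.add_0_r, Nat.add_comm, Nat.Div0.mod_add,
    Nat.mod_small in H by lia.
  apply H; auto; nia.
Qed.

Lemma fin_argmax n (g : nat -> R) :
  (0 < n)%nat -> exists k, (k < n)%nat /\ forall i, (i < n)%nat -> g i <= g k.
Proof.
  induction n as [|n IH]; intros Hn; [lia|].
  destruct (Nat.eq_dec n 0) as [->|Hn0].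
  { exists 0%nat. split; [lia|]. intros i Hi. replace i with 0%nat by lia. lra. }
  destruct IH as [k [Hk H]]; [lia|].
  destruct (Rle_dec (g k) (g n)); [exists n|exists k]; split; try lia;
    intros i Hi; destruct (Nat.eq_dec i n) as [->|]; try lra;
    specialize (H i ltac:(lia)); lra.
Qed.

Lemma eventually_forall_lt n (Q : nat -> R -> Prop) :
  (forall i, (i < n)%nat -> exists T, forall t, t >= T -> Q i t) ->
  exists T, forall i, (i < n)%nat -> forall t, t >= T -> Q i t.
Proof.
  induction n; intros H; [exists 0; intros; lia|].
  destruct IHn as [T1 H1]; [intros; apply H; lia|]. destruct (H n) as [T2 H2]; [lia|].
  exists (Rmax T1 T2). intros i Hi t Ht.
  pose proof (Rmax_l T1 T2). pose proof (Rmax_r T1 T2).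
  destruct (Nat.eq_dec i n) as [->|]; [apply H2; lra|apply H1; [lia|lra]].
Qed.

(** * Calculus *)

Lemma derivable_pt_lim_fsum n (F : nat -> R -> R) l t :
  (forall i, (i < n)%nat -> derivable_pt_lim (F i) t (l i)) ->
  derivable_pt_lim (fun u => fsum n (fun i => F i u)) t (fsum n l).
Proof.
  induction n; simpl; intros H.
  - apply derivable_pt_lim_const.
  - apply (derivable_pt_lim_plus (fun u => fsum n (fun i => F i u)) (F n)).
    + apply IHn. intros; apply H; lia.
    + apply H; lia.
Qed.

Lemma derivable_pt_lim_sqr_dev f t l C :
  derivable_pt_lim f t l ->
  derivable_pt_lim (fun u => (f u - C) * (f u - C)) t (2 * (f t - C) * l).
Proof.
  intros H.
  assert (H1 : derivable_pt_lim (fun u => f u - C) t l).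
  { replace l with (l - 0) by ring.
    apply (derivable_pt_lim_minus f (fct_cte C)); [auto|apply derivable_pt_lim_const]. }
  replace (2 * (f t - C) * l) with (l * (f t - C) + (f t - C) * l) by ring.
  apply (derivable_pt_lim_mult (fun u => f u - C) (fun u => f u - C)); auto.
Qed.

Lemma derivable_pt_lim_exp_lin K t :
  derivable_pt_lim (fun u => exp (K * u)) t (exp (K * t) * K).
Proof.
  apply (derivable_pt_lim_comp (fun u => K * u) exp).
  - pose proof (derivable_pt_lim_scal id K t 1 (derivable_pt_lim_id t)) as H.
    rewrite Rmult_1_r in H. exact H.
  - apply derivable_pt_lim_exp.
Qed.

Lemma nonpos_derivative_decreasing f f' a b :
  a <= b -> (forall c, a <= c <= b -> derivable_pt_lim f c (f' c)) ->
  (forall c, a <= c <= b -> f' c <= 0) -> f b <= f a.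
Proof.
  intros Hab Hd Hn. destruct (Req_dec a b) as [->|Hne]; [lra|].
  destruct (MVT_cor2 f f' a b) as [c [Hc1 Hc2]]; [lra|auto|].
  assert (f' c <= 0) by (apply Hn; lra). nra.
Qed.

Lemma zero_derivative_constant f f' a b :
  a <= b -> (forall c, a <= c <= b -> derivable_pt_lim f c (f' c)) ->
  (forall c, a <= c <= b -> f' c = 0) -> f b = f a.
Proof.
  intros Hab Hd Hn. destruct (Req_dec a b) as [->|Hne]; [lra|].
  destruct (MVT_cor2 f f' a b) as [c [Hc1 Hc2]]; [lra|auto|].
  rewrite Hn in Hc1 by lra. lra.
Qed.

(* If a convergent function has a derivative that eventually stays close to [l], then [l = 0]:
   otherwise the increments over unit intervals would stay bounded away from zero. *)
Lemma derivative_limit_of_convergent f f' T0 C l :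
  (forall t, T0 <= t -> derivable_pt_lim f t (f' t)) ->
  (forall eps, 0 < eps -> exists T, forall t, t >= T -> Rabs (f t - C) < eps) ->
  (forall eps, 0 < eps -> exists T, forall t, t >= T -> Rabs (f' t - l) <= eps) ->
  l = 0.
Proof.
  intros Hd Hf Hf'. destruct (Req_dec l 0) as [|Hl]; auto. exfalso.
  assert (Hk : 0 < Rabs l / 4) by (pose proof (Rabs_pos_lt l Hl); lra).
  destruct (Hf _ Hk) as [T1 HT1]. destruct (Hf' _ Hk) as [T2 HT2].
  set (T := Rmax T0 (Rmax T1 T2)).
  assert (T0 <= T /\ T >= T1 /\ T >= T2) as (H0 & H1 & H2).
  { unfold T. pose proof (Rmax_l T0 (Rmax T1 T2)). pose proof (Rmax_r T0 (Rmax T1 T2)).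
    pose proof (Rmax_l T1 T2). pose proof (Rmax_r T1 T2). lra. }
  destruct (MVT_cor2 f f' T (T + 1)) as [c [Hc1 Hc2]]; [lra|intros; apply Hd; lra|].
  replace (T + 1 - T) with 1 in Hc1 by ring. rewrite Rmult_1_r in Hc1.
  assert (Hinc : Rabs (f' c) < Rabs l / 2).
  { rewrite <- Hc1. replace (f (T + 1) - f T) with ((f (T + 1) - C) - (f T - C)) by ring.
    pose proof (HT1 T H1). pose proof (HT1 (T + 1) ltac:(lra)).
    eapply Rle_lt_trans; [apply Rabs_triang|]. rewrite Rabs_Ropp. lra. }
  pose proof (HT2 c ltac:(lra)) as Hclose.
  pose proof (Rabs_triang_inv l (l - f' c)) as Htri.
  replace (l - (l - f' c)) with (f' c) in Htri by ring. rewrite Rabs_minus_sym in Htri. lra.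
Qed.

(* Backward uniqueness for [g' >= - K g]: the function [- g(t) e^(K t)] is nonincreasing. *)
Lemma gronwall_backward g g' K a b :
  a <= b -> (forall t, a <= t <= b -> derivable_pt_lim g t (g' t)) ->
  (forall t, a <= t <= b -> - (K * g t) <= g' t) -> 0 <= g a -> g b = 0 -> g a = 0.
Proof.
  intros Hab Hd Hg Ha Hb.
  set (h := fun t => - (g t * exp (K * t))).
  assert (Hh : h b <= h a).
  { apply (nonpos_derivative_decreasing h
      (fun t => - (g' t * exp (K * t) + g t * (exp (K * t) * K)))); auto.
    - intros t Ht. apply (derivable_pt_lim_opp (fun u => g u * exp (K * u))).
      apply (derivable_pt_lim_mult g (fun u => exp (K * u))).
      + apply Hd, Ht.
      + apply derivable_pt_lim_exp_lin.
    - intros t Ht. pose proof (Hg t Ht). pose proof (exp_pos (K * t)). nra. }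
  unfold h in Hh. rewrite Hb in Hh. pose proof (exp_pos (K * a)). nra.
Qed.

(** * Saturation *)

Lemma sat_id si x : -si <= x <= si -> sat si x = x.
Proof.
  intros Hx. unfold sat, sign, Rmin.
  destruct (Rlt_dec 0 x); [|destruct (Rlt_dec x 0)].
  - rewrite Rabs_right by lra. destruct (Rle_dec x si); lra.
  - rewrite Rabs_left by lra. destruct (Rle_dec (-x) si); lra.
  - lra.
Qed.

Lemma sat_upper si x : 0 < si -> si <= x -> sat si x = si.
Proof.
  intros Hs Hx. unfold sat, sign, Rmin.
  destruct (Rlt_dec 0 x); [|lra]. rewrite Rabs_right by lra. destruct (Rle_dec x si); lra.
Qed.

Lemma sat_lower si x : 0 < si -> x <= -si -> sat si x = - si.
Proof.
  intros Hs Hx. unfold sat, sign, Rmin.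
  destruct (Rlt_dec 0 x); [lra|]. destruct (Rlt_dec x 0); [|lra].
  rewrite Rabs_left by lra. destruct (Rle_dec (-x) si); lra.
Qed.

Ltac sat_cases si x Hs :=
  let H := fresh in
  destruct (Rle_lt_dec x (-si)) as [H|H];
  [rewrite (sat_lower si x Hs H) in *
  | destruct (Rle_lt_dec si x) as [?|?];
    [rewrite (sat_upper si x Hs) in * by lra | rewrite (sat_id si x) in * by lra]].

Lemma Rabs_sat_le si x : 0 < si -> Rabs (sat si x) <= si.
Proof. intros Hs. sat_cases si x Hs; unfold Rabs; repeat destruct Rcase_abs; lra. Qed.

Lemma sat_lipschitz si a b : 0 < si -> Rabs (sat si a - sat si b) <= Rabs (a - b).
Proof.
  intros Hs. sat_cases si a Hs; sat_cases si b Hs; unfold Rabs; repeat destruct Rcase_abs; lra.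
Qed.

Lemma sat_locally_const si C x :
  0 < si -> sat si C <> C -> Rabs (x - C) < Rabs (C - sat si C) -> sat si x = sat si C.
Proof.
  intros Hs HC Hx. sat_cases si C Hs; try lra;
    sat_cases si x Hs; revert Hx; unfold Rabs; repeat destruct Rcase_abs; lra.
Qed.

(* The primitive of [sat si] vanishing at [0]. *)
Definition sat_prim si x := x * sat si x - sat si x * sat si x / 2.

Lemma sat_prim_nonneg si x : 0 < si -> 0 <= sat_prim si x.
Proof. intros Hs. unfold sat_prim. sat_cases si x Hs; nra. Qed.

Lemma sat_prim_taylor si x y :
  0 < si -> 0 <= sat_prim si y - sat_prim si x - sat si x * (y - x) <= (y - x) * (y - x).
Proof.
  intros Hs. pose proof (Rle_0_sqr (y - x)) as Q; unfold Rsqr in Q. unfold sat_prim.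
  sat_cases si x Hs; sat_cases si y Hs; split; nra.
Qed.

Lemma sat_prim_deriv si x : 0 < si -> derivable_pt_lim (sat_prim si) x (sat si x).
Proof.
  intros Hs eps He. exists (mkposreal eps He). intros h Hh Hh'. simpl in Hh'.
  destruct (sat_prim_taylor si x (x + h) Hs) as [B1 B2].
  replace (x + h - x) with h in * by ring.
  replace ((sat_prim si (x + h) - sat_prim si x) / h - sat si x)
    with ((sat_prim si (x + h) - sat_prim si x - sat si x * h) / h) by (field; auto).
  unfold Rdiv. rewrite Rabs_mult, Rabs_inv, (Rabs_right (_ - _ - _)) by lra.
  assert (0 < Rabs h) by (apply Rabs_pos_lt; auto).
  apply (Rle_lt_trans _ (h * h * / Rabs h)).
  - apply Rmult_le_compat_r; [left; apply Rinv_0_lt_compat|]; lra.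
  - replace (h * h) with (Rabs h * Rabs h) by (rewrite <- Rabs_mult; apply Rabs_right; nra).
    field_simplify; lra.
Qed.

(* Bregman divergence of [sat_prim si] at [c], with the slope [sat si c] written as [c]:
   only meaningful for unsaturated [c]. *)
Definition bregman si c z := sat_prim si z - sat_prim si c - c * (z - c).

Lemma bregman_bounds si c z :
  0 < si -> Rabs c <= si -> 0 <= bregman si c z <= (z - c) * (z - c).
Proof.
  intros Hs Hc. unfold bregman. pose proof (sat_prim_taylor si c z Hs) as Htaylor.
  rewrite (sat_id si c) in Htaylor by (apply Rabs_le_inv, Hc). lra.
Qed.

Lemma bregman_lower_left si c z d :
  0 < si -> 0 <= c <= si -> 0 < d <= si -> z <= c - d -> d * d / 2 <= bregman si c z.
Proof.
  intros Hs Hc Hd Hz. unfold bregman, sat_prim.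
  rewrite (sat_id si c) by lra. sat_cases si z Hs; nra.
Qed.

Lemma bregman_lower_right si c z d :
  0 < si -> -si <= c <= 0 -> 0 < d <= si -> c + d <= z -> d * d / 2 <= bregman si c z.
Proof.
  intros Hs Hc Hd Hz. unfold bregman, sat_prim.
  rewrite (sat_id si c) by lra. sat_cases si z Hs; nra.
Qed.

(** * Laplacian of a strongly connected graph *)

Lemma clos_trans_crossing (E : nat -> nat -> Prop) (P : nat -> Prop) a b :
  clos_trans nat E a b -> P a -> ~ P b -> exists u v, E u v /\ P u /\ ~ P v.
Proof.
  induction 1 as [a b Hab|a c b _ IH1 _ IH2]; intros Pa Pb; [exists a, b; auto|].
  destruct (classic (P c)); [apply IH2|apply IH1]; auto.
Qed.

Lemma clos_trans_transport (E : nat -> nat -> Prop) (P : nat -> Prop) :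
  (forall u v, E u v -> P u -> P v) -> forall a b, clos_trans nat E a b -> P a -> P b.
Proof. intros H a b C. induction C; eauto. Qed.

Lemma clos_trans_transport_back (E : nat -> nat -> Prop) (P : nat -> Prop) :
  (forall u v, E u v -> P v -> P u) -> forall a b, clos_trans nat E a b -> P b -> P a.
Proof. intros H a b C. induction C; eauto. Qed.

Section Laplacian.

Variables (N : nat) (alpha : nat -> nat -> R).
Hypothesis alpha_ge0 : forall i j, (i < N)%nat -> (j < N)%nat -> 0 <= alpha i j.

Definition out_degree i := fsum N (fun k => alpha i k).

(* [flow y i] is the [i]-th entry of [- L y]. *)
Definition flow (y : nat -> R) i := fsum N (fun j => alpha i j * (y j - y i)).

Definition dissipation (p y : nat -> R) :=
  fsum N (fun i => p i * fsum N (fun j => alpha i j * ((y j - y i) * (y j - y i)))).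

Lemma out_degree_nonneg i : (i < N)%nat -> 0 <= out_degree i.
Proof. intros Hi. apply fsum_nonneg. intros; apply alpha_ge0; auto. Qed.

Lemma flow_expand y i : flow y i = fsum N (fun j => alpha i j * y j) - y i * out_degree i.
Proof.
  unfold flow, out_degree. rewrite <- fsum_mult_l, <- fsum_minus. apply fsum_ext; intros; ring.
Qed.

Lemma dissipation_nonneg p y : (forall i, (i < N)%nat -> 0 <= p i) -> 0 <= dissipation p y.
Proof.
  intros Hp. apply fsum_nonneg. intros i Hi. apply Rmult_le_pos; auto.
  apply fsum_nonneg. intros j Hj. apply Rmult_le_pos; auto. apply Rle_0_sqr.
Qed.

Lemma flow_lipschitz y z r i :
  (i < N)%nat -> (forall j, (j < N)%nat -> Rabs (y j - z j) <= r) ->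
  Rabs (flow y i - flow z i) <= 2 * r * out_degree i.
Proof.
  intros Hi H. unfold flow, out_degree. rewrite <- fsum_minus, <- fsum_mult_l.
  eapply Rle_trans; [apply fsum_abs|]. apply fsum_le. intros j Hj.
  replace (alpha i j * (y j - y i) - alpha i j * (z j - z i))
    with (alpha i j * ((y j - z j) - (y i - z i))) by ring.
  rewrite Rabs_mult, (Rabs_right (alpha i j)) by (apply Rle_ge, alpha_ge0; auto).
  replace (2 * r * alpha i j) with (alpha i j * (r + r)) by ring.
  apply Rmult_le_compat_l; [apply alpha_ge0; auto|].
  eapply Rle_trans; [apply Rabs_triang|]. rewrite Rabs_Ropp.
  pose proof (H i Hi). pose proof (H j Hj). lra.
Qed.

(* Maximum principle: at a maximiser [u] of [z], [flow z u] is a sum of nonpositive terms, so it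
   vanishes only if every out-neighbour of [u] is a maximiser too. *)
Lemma flow_zero_const z :
  strongly_connected N alpha -> (forall i, (i < N)%nat -> flow z i = 0) ->
  forall i j, (i < N)%nat -> (j < N)%nat -> z i = z j.
Proof.
  intros Hsc Hf.
  assert (Hmax : forall i j, (i < N)%nat -> (j < N)%nat -> z j <= z i).
  { intros i j Hi Hj. destruct (fin_argmax N z ltac:(lia)) as [k [Hk Hmax]].
    cut (z i = z k); [intros ->; apply Hmax, Hj|].
    destruct (Nat.eq_dec k i) as [->|Hki]; [reflexivity|].
    apply (clos_trans_transport (edge N alpha) (fun v => z v = z k)) with k; auto.
    intros u v [Hu [Hv Huv]] Hzu.
    assert (Hterms : forall l, (l < N)%nat -> 0 <= - (alpha u l * (z l - z u))).
    { intros l Hl. pose proof (Hmax l Hl). pose proof (alpha_ge0 u l Hu Hl). nra. }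
    assert (Hsum : fsum N (fun l => - (alpha u l * (z l - z u))) = 0).
    { rewrite (fsum_ext _ _ (fun l => -1 * (alpha u l * (z l - z u)))) by (intros; ring).
      rewrite fsum_mult_l. fold (flow z u). rewrite Hf; auto; ring. }
    pose proof (fsum_nonneg_eq0 _ _ Hterms Hsum v Hv) as Huv0. simpl in Huv0.
    assert (alpha u v * (z v - z u) = 0) as Hm by lra.
    destruct (Rmult_integral _ _ Hm); lra. }
  intros i j Hi Hj. pose proof (Hmax i j Hi Hj). pose proof (Hmax j i Hj Hi). lra.
Qed.

Definition ball_count (y : nat -> R) r :=
  fsum N (fun j => if Rle_dec (Rabs (y j - y 0%nat)) r then 1 else 0).

(* A node outside the ball of radius [k g] around node [0] is reached from inside by an edge,
   whose head lies in the ball of radius [(k+1) g]. *)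
Lemma ball_count_grows y g k :
  strongly_connected N alpha -> (0 < N)%nat -> 0 < g ->
  (forall a b, (a < N)%nat -> (b < N)%nat -> alpha a b > 0 -> Rabs (y b - y a) < g) ->
  INR (Nat.min (S k) N) <= ball_count y (INR k * g).
Proof.
  intros Hsc HN Hg Hy.
  set (r := fun j => Rabs (y j - y 0%nat)).
  assert (Hr0 : forall l, r 0%nat <= INR l * g).
  { intros l. unfold r. rewrite Rminus_diag, Rabs_R0. pose proof (pos_INR l). nra. }
  assert (Hind : forall l j, 0 <= (if Rle_dec (r j) (INR l * g) then 1 else 0))
    by (intros; destruct Rle_dec; lra).
  induction k.
  - replace (Nat.min 1 N) with 1%nat by lia.
    apply (Rle_trans _ (if Rle_dec (r 0%nat) (INR 0 * g) then 1 else 0)).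
    + destruct Rle_dec as [|n]; [simpl; lra|exfalso; apply n, Hr0].
    + apply (fsum_ge_term _ (fun j => if Rle_dec (r j) (INR 0 * g) then 1 else 0)); auto.
  - assert (Hmono : ball_count y (INR k * g) <= ball_count y (INR (S k) * g)).
    { apply fsum_le. intros j _. rewrite S_INR.
      destruct (Rle_dec _ (INR k * g)), (Rle_dec _ ((INR k + 1) * g)); lra. }
    assert (INR (Nat.min (S (S k)) N) <= INR (Nat.min (S k) N) + 1)
      by (rewrite <- S_INR; apply le_INR; lia).
    destruct (classic (forall j, (j < N)%nat -> r j <= INR k * g)) as [Hall|Hnot].
    + assert (ball_count y (INR k * g) = INR N).
      { unfold ball_count. rewrite (fsum_ext _ _ (fun _ => 1)), fsum_const; [ring|].
        intros j Hj. destruct Rle_dec as [|n]; [reflexivity|exfalso; apply n, Hall, Hj]. }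
      assert (INR (Nat.min (S (S k)) N) <= INR N) by (apply le_INR; lia). lra.
    + apply not_all_ex_not in Hnot as [j Hj]. apply imply_to_and in Hj as [Hj Hjn].
      assert (Hj0 : j <> 0%nat) by (intros ->; auto).
      destruct (clos_trans_crossing _ (fun v => r v <= INR k * g) 0%nat j
                  (Hsc 0%nat j HN Hj (not_eq_sym Hj0)) (Hr0 k) Hjn)
        as [u [v [[Hu [Hv Huv]] [Pu Pv]]]].
      assert (Hv1 : r v <= INR (S k) * g).
      { unfold r in *. rewrite S_INR. specialize (Hy u v Hu Hv Huv).
        replace (y v - y 0%nat) with ((y v - y u) + (y u - y 0%nat)) by ring.
        eapply Rle_trans; [apply Rabs_triang|]. lra. }
      assert (ball_count y (INR k * g) + 1 <= ball_count y (INR (S k) * g)); [|lra].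
      apply (fsum_le_add1 _ _ _ v); auto.
      * intros l _. rewrite S_INR.
        destruct (Rle_dec _ (INR k * g)), (Rle_dec _ ((INR k + 1) * g)); lra.
      * fold (r v). do 2 destruct Rle_dec; try contradiction; lra.
Qed.

Lemma edge_close_spread y g :
  strongly_connected N alpha -> 0 < g ->
  (forall a b, (a < N)%nat -> (b < N)%nat -> alpha a b > 0 -> Rabs (y b - y a) < g) ->
  forall i j, (i < N)%nat -> (j < N)%nat -> Rabs (y i - y j) <= 2 * INR N * g.
Proof.
  intros Hsc Hg Hy.
  assert (Hball : forall j, (j < N)%nat -> Rabs (y j - y 0%nat) <= INR N * g).
  { intros j Hj. pose proof (ball_count_grows y g N Hsc ltac:(lia) Hg Hy) as Hcnt.
    replace (Nat.min (S N) N) with N in Hcnt by lia.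
    assert ((if Rle_dec (Rabs (y j - y 0%nat)) (INR N * g) then 1 else 0) = 1) as Hind.
    { apply (fsum_le1_eq1 N (fun j => if Rle_dec (Rabs (y j - y 0%nat)) (INR N * g) then 1 else 0));
        auto.
      intros; destruct Rle_dec; lra. }
    destruct Rle_dec; [auto|lra]. }
  intros i j Hi Hj. pose proof (Hball i Hi). pose proof (Hball j Hj).
  replace (y i - y j) with ((y i - y 0%nat) - (y j - y 0%nat)) by ring.
  eapply Rle_trans; [apply Rabs_triang|]. rewrite Rabs_Ropp. lra.
Qed.

Lemma small_dissipation_spread p d :
  strongly_connected N alpha -> (forall i, (i < N)%nat -> 0 < p i) -> 0 < d ->
  exists w, 0 < w /\ forall y, dissipation p y < w ->
    forall i j, (i < N)%nat -> (j < N)%nat -> Rabs (y i - y j) <= d.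
Proof.
  intros Hsc Hp Hd.
  destruct (fin_pos_lower_bound N p) as [pm [Hpm Hpmp]].
  destruct (fin_pos_lower_bound2 N alpha) as [am [Ham Hamp]].
  pose proof (pos_INR N).
  set (g := d / (2 * (INR N + 1))).
  assert (Hg : 0 < g) by (unfold g; apply Rdiv_lt_0_compat; lra).
  exists (pm * am * (g * g)). split; [apply Rmult_lt_0_compat; nra|].
  intros y Hy.
  assert (Hedge : forall a b, (a < N)%nat -> (b < N)%nat -> alpha a b > 0 ->
                    Rabs (y b - y a) < g).
  { intros a b Ha Hb Hab.
    assert (Hrow : alpha a b * ((y b - y a) * (y b - y a))
                   <= fsum N (fun j => alpha a j * ((y j - y a) * (y j - y a)))).
    { apply (fsum_ge_term N (fun j => alpha a j * ((y j - y a) * (y j - y a)))); auto.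
      intros j Hj. apply Rmult_le_pos; [apply alpha_ge0; auto|apply Rle_0_sqr]. }
    assert (Hall : p a * fsum N (fun j => alpha a j * ((y j - y a) * (y j - y a)))
                   <= dissipation p y).
    { apply (fsum_ge_term N
        (fun i => p i * fsum N (fun j => alpha i j * ((y j - y i) * (y j - y i))))); auto.
      intros i Hi. apply Rmult_le_pos; [left; auto|].
      apply fsum_nonneg. intros j Hj. apply Rmult_le_pos; [apply alpha_ge0; auto|apply Rle_0_sqr]. }
    pose proof (Hpmp a Ha (Hp a Ha)). pose proof (Hamp a b Ha Hb Hab).
    pose proof (Rle_0_sqr (y b - y a)). unfold Rsqr in *.
    assert (pm * am * ((y b - y a) * (y b - y a)) < pm * am * (g * g)) as Hsq.
    { assert (pm * am <= p a * alpha a b) by (apply Rmult_le_compat; lra). nra. }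
    apply Rmult_lt_reg_l in Hsq; [|nra].
    rewrite <- (Rabs_right g) by lra. apply Rsqr_lt_abs_0. unfold Rsqr. lra. }
  intros i j Hi Hj. eapply Rle_trans; [apply (edge_close_spread y g); auto|].
  unfold g. apply (Rmult_le_reg_r (2 * (INR N + 1))); [lra|]. field_simplify; lra.
Qed.

Section LeftNull.

Variable p : nat -> R.
Hypothesis p_left_null : left_null N alpha p.

Lemma left_null_column j :
  (j < N)%nat -> fsum N (fun i => p i * alpha i j) = p j * out_degree j.
Proof.
  intros Hj. pose proof (p_left_null j Hj) as H. unfold laplacian in H.
  rewrite (fsum_ext _ _
    (fun i => (if Nat.eq_dec i j then p i * out_degree i else 0) - p i * alpha i j)) in H.
  - rewrite fsum_minus, (fsum_delta N (fun i => p i * out_degree i)) in H by auto. lra.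
  - intros i Hi. unfold out_degree. destruct (Nat.eq_dec i j); ring.
Qed.

Lemma left_null_rows z :
  fsum N (fun i => p i * fsum N (fun j => alpha i j * z j)) =
  fsum N (fun j => p j * out_degree j * z j).
Proof.
  rewrite (fsum_ext _ _ (fun i => fsum N (fun j => p i * alpha i j * z j))).
  - rewrite fsum_swap. apply fsum_ext. intros j Hj. rewrite fsum_mult_r, left_null_column; auto.
  - intros i Hi. rewrite <- fsum_mult_l. apply fsum_ext. intros; ring.
Qed.

Lemma left_null_flow_sum y : fsum N (fun i => p i * flow y i) = 0.
Proof.
  rewrite (fsum_ext _ _
    (fun i => p i * fsum N (fun j => alpha i j * y j) - p i * out_degree i * y i)).
  - rewrite fsum_minus, left_null_rows. ring.
  - intros i Hi. rewrite flow_expand. ring.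
Qed.

Lemma left_null_flow_energy y :
  fsum N (fun i => p i * (y i * flow y i)) = - / 2 * dissipation p y.
Proof.
  assert (Hsq : dissipation p y = fsum N (fun i =>
      p i * fsum N (fun j => alpha i j * (y j * y j))
      + -2 * (p i * (y i * fsum N (fun j => alpha i j * y j)))
      + p i * out_degree i * (y i * y i))).
  { apply fsum_ext. intros i Hi.
    assert (fsum N (fun j => alpha i j * ((y j - y i) * (y j - y i))) =
      fsum N (fun j => alpha i j * (y j * y j)) - 2 * y i * fsum N (fun j => alpha i j * y j)
      + y i * y i * out_degree i) as ->; [|ring].
    unfold out_degree. rewrite <- !fsum_mult_l, <- fsum_minus, <- fsum_plus.
    apply fsum_ext; intros; ring. }
  rewrite Hsq, !fsum_plus, fsum_mult_l, left_null_rows.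
  rewrite (fsum_ext _ _ (fun i => p i * (y i * fsum N (fun j => alpha i j * y j))
                                   - p i * out_degree i * (y i * y i))).
  - rewrite fsum_minus. lra.
  - intros i Hi. rewrite flow_expand. ring.
Qed.

(* For the positive part [pp] of [p], the column balances [sum_i pp_i alpha_ij - pp_j d_j] are
   nonnegative with total zero, hence vanish; so a node with [p <= 0] only receives edges from
   nodes with [p <= 0], and by strong connectivity [p <= 0] would hold everywhere. *)
Lemma left_null_pos :
  strongly_connected N alpha -> fsum N p = 1 -> forall k, (k < N)%nat -> 0 < p k.
Proof.
  intros Hsc Hs.
  set (pp := fun j => Rmax (p j) 0).
  assert (Hpp : forall j, 0 <= pp j /\ p j <= pp j)
    by (intros; unfold pp; split; [apply Rmax_r|apply Rmax_l]).
  assert (Hslack : forall j, (j < N)%nat ->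
            0 <= fsum N (fun i => pp i * alpha i j) - pp j * out_degree j).
  { intros j Hj. unfold pp at 2. destruct (Rle_dec (p j) 0).
    - rewrite Rmax_right by lra.
      assert (0 <= fsum N (fun i => pp i * alpha i j)); [|lra].
      apply fsum_nonneg. intros i Hi. specialize (Hpp i). specialize (alpha_ge0 i j Hi Hj). nra.
    - rewrite Rmax_left, <- left_null_column by (auto; lra).
      assert (fsum N (fun i => p i * alpha i j) <= fsum N (fun i => pp i * alpha i j)); [|lra].
      apply fsum_le. intros i Hi. specialize (Hpp i). specialize (alpha_ge0 i j Hi Hj). nra. }
  assert (Hsum : fsum N (fun j => fsum N (fun i => pp i * alpha i j) - pp j * out_degree j) = 0).
  { rewrite fsum_minus, <- fsum_swap.
    rewrite (fsum_ext _ (fun i => fsum N (fun j => pp i * alpha i j))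
                        (fun i => pp i * out_degree i));
      [ring|intros; apply fsum_mult_l]. }
  pose proof (fsum_nonneg_eq0 _ _ Hslack Hsum) as Hz.
  assert (Hback : forall u v, edge N alpha u v -> p v <= 0 -> p u <= 0).
  { intros u v [Hu [Hv Huv]] Hpv. specialize (Hz v Hv). simpl in Hz.
    assert (pp v = 0) as Hv0 by (unfold pp; rewrite Rmax_right; lra).
    rewrite Hv0, Rmult_0_l, Rminus_0_r in Hz.
    assert (Hterm : pp u * alpha u v = 0).
    { apply (fsum_nonneg_eq0 N (fun i => pp i * alpha i v)); auto.
      intros i Hi. specialize (Hpp i). specialize (alpha_ge0 i v Hi Hv). nra. }
    destruct (Rmult_integral _ _ Hterm); specialize (Hpp u); lra. }
  intros k Hk. destruct (Rlt_le_dec 0 (p k)) as [|Hnk]; auto. exfalso.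
  assert (Hall : forall i, (i < N)%nat -> p i <= 0).
  { intros i Hi. destruct (Nat.eq_dec i k) as [->|Hne]; auto.
    apply (clos_trans_transport_back (edge N alpha) (fun v => p v <= 0) Hback i k); auto. }
  pose proof (fsum_le _ _ _ Hall). rewrite fsum_zero in *. lra.
Qed.

End LeftNull.

End Laplacian.

(** * Zero-mean deviations *)

Section Averaging.

Variables (N : nat) (p : nat -> R) (pm : R).
Hypotheses (pm_pos : 0 < pm) (pm_le1 : pm <= 1) (p_ge_pm : forall i, (i < N)%nat -> pm <= p i)
  (p_sum1 : fsum N p = 1).

(* Every term of [sum_i p_i (z i - c + d) = d] is nonnegative. *)
Lemma mean_zero_upper_bound z c d :
  fsum N (fun i => p i * (z i - c)) = 0 -> 0 <= d -> (forall i, (i < N)%nat -> - d <= z i - c) ->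
  forall k, (k < N)%nat -> z k - c <= d / pm.
Proof.
  intros Hz Hd Hlo k Hk.
  assert (Hu : fsum N (fun i => p i * (z i - c) + p i * d) = d)
    by (rewrite fsum_plus, Hz, fsum_mult_r, p_sum1; ring).
  assert (Hk' : p k * (z k - c) + p k * d <= d).
  { rewrite <- Hu at 2. apply (fsum_ge_term N (fun i => p i * (z i - c) + p i * d)); auto.
    intros i Hi. specialize (p_ge_pm i Hi). specialize (Hlo i Hi). nra. }
  specialize (p_ge_pm k Hk).
  apply (Rmult_le_reg_l pm); auto. field_simplify; [|lra].
  destruct (Rle_lt_dec (z k - c) 0); nra.
Qed.

Lemma mean_zero_lower_bound z c d :
  fsum N (fun i => p i * (z i - c)) = 0 -> 0 <= d -> (forall i, (i < N)%nat -> z i - c <= d) ->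
  forall k, (k < N)%nat -> - (d / pm) <= z k - c.
Proof.
  intros Hz Hd Hhi k Hk.
  assert (- z k - - c <= d / pm); [|lra].
  apply (mean_zero_upper_bound (fun i => - z i)); auto.
  - rewrite (fsum_ext _ _ (fun i => -1 * (p i * (z i - c)))) by (intros; ring).
    rewrite fsum_mult_l, Hz; ring.
  - intros i Hi; specialize (Hhi i Hi); lra.
Qed.

Variables (s : nat -> R) (c : R).
Hypotheses (s_pos : forall i, (i < N)%nat -> 0 < s i)
  (c_unsat : forall i, (i < N)%nat -> Rabs c <= s i).

(* Coercivity of the weighted Bregman divergence on the hyperplane of mean [c]: a deviation of
   one sign costs at least [d^2/2] in some coordinate, and bounds the other sign via the mean. *)
Lemma bregman_coercive eps :
  0 < eps -> exists zeta, 0 < zeta /\ forall z, fsum N (fun i => p i * (z i - c)) = 0 ->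
    fsum N (fun i => p i * bregman (s i) c (z i)) <= zeta ->
    forall k, (k < N)%nat -> Rabs (z k - c) < eps.
Proof.
  intros Heps.
  destruct (fin_pos_lower_bound N s) as [smin [Hsm Hsmin]].
  set (d := Rmin (pm * eps / 2) smin).
  assert (Hd : 0 < d) by (apply Rmin_glb_lt; nra).
  assert (Hd1 : d <= pm * eps / 2) by apply Rmin_l. assert (Hd2 : d <= smin) by apply Rmin_r.
  exists (pm * (d * d) / 4). assert (0 < d * d) by nra. split; [nra|]. intros z Hz HD k Hk.
  assert (Hc : forall i, (i < N)%nat -> - s i <= c <= s i)
    by (intros i Hi; apply Rabs_le_inv, c_unsat, Hi).
  assert (He : forall i, (i < N)%nat -> bregman (s i) c (z i) < d * d / 2).
  { intros i Hi.
    assert (Hnn : forall j, (j < N)%nat -> 0 <= p j * bregman (s j) c (z j)).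
    { intros j Hj. pose proof (bregman_bounds (s j) c (z j) (s_pos j Hj) (c_unsat j Hj)).
      specialize (p_ge_pm j Hj). nra. }
    pose proof (fsum_ge_term _ _ i Hnn Hi).
    pose proof (p_ge_pm i Hi).
    pose proof (bregman_bounds (s i) c (z i) (s_pos i Hi) (c_unsat i Hi)).
    nra. }
  assert (Hdp : d / pm <= eps / 2) by (apply (Rmult_le_reg_l pm); auto; field_simplify; nra).
  assert (Hds : forall i, (i < N)%nat -> 0 < d <= s i)
    by (intros i Hi; specialize (Hsmin i Hi (s_pos i Hi)); lra).
  destruct (Rle_dec 0 c) as [Hc0|Hc0].
  - assert (Hlo : forall i, (i < N)%nat -> - d <= z i - c).
    { intros i Hi. destruct (Rle_dec (z i) (c - d)) as [Hzi|]; [|lra]. exfalso.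
      pose proof (bregman_lower_left (s i) c (z i) d (s_pos i Hi) ltac:(specialize (Hc i Hi); lra)
                    (Hds i Hi) Hzi).
      specialize (He i Hi). lra. }
    pose proof (mean_zero_upper_bound z c d Hz ltac:(lra) Hlo k Hk). specialize (Hlo k Hk).
    apply Rabs_def1; nra.
  - assert (Hhi : forall i, (i < N)%nat -> z i - c <= d).
    { intros i Hi. destruct (Rle_dec (c + d) (z i)) as [Hzi|]; [|lra]. exfalso.
      pose proof (bregman_lower_right (s i) c (z i) d (s_pos i Hi) ltac:(specialize (Hc i Hi); lra)
                    (Hds i Hi) Hzi).
      specialize (He i Hi). lra. }
    pose proof (mean_zero_lower_bound z c d Hz ltac:(lra) Hhi k Hk). specialize (Hhi k Hk).
    apply Rabs_def1; nra.
Qed.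

(* If some agent is saturated, say at [s m], every output is within [d] of [s m] and hence no state
   lies below [c - d]; otherwise all states equal their outputs. *)
Lemma outputs_close_states_close z d :
  fsum N (fun i => p i * (z i - c)) = 0 -> 0 <= d -> (forall i, (i < N)%nat -> d < s i) ->
  (forall i j, (i < N)%nat -> (j < N)%nat -> Rabs (sat (s i) (z i) - sat (s j) (z j)) <= d) ->
  forall k, (k < N)%nat -> Rabs (z k - c) <= d / pm.
Proof.
  intros Hz Hd Hds Hy k Hk.
  assert (Hdd : d <= d / pm) by (apply (Rmult_le_reg_l pm); auto; field_simplify; nra).
  assert (Hc : forall i, (i < N)%nat -> - s i <= c <= s i)
    by (intros i Hi; apply Rabs_le_inv, c_unsat, Hi).
  destruct (classic (exists m, (m < N)%nat /\ s m < Rabs (z m))) as [[m [Hm Hzm]]|Hno].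
  - pose proof (s_pos m Hm) as Hsm. pose proof (Hc m Hm).
    assert (Hsat : forall i, (i < N)%nat -> Rabs (sat (s i) (z i) - sat (s m) (z m)) <= d)
      by (intros i Hi; apply Hy; auto).
    unfold Rabs in Hzm; destruct Rcase_abs in Hzm.
    + rewrite (sat_lower (s m) (z m)) in Hsat by lra.
      assert (Hhi : forall i, (i < N)%nat -> z i - c <= d).
      { intros i Hi. specialize (Hsat i Hi). pose proof (Hds i Hi). pose proof (s_pos i Hi) as Hs0.
        apply Rabs_le_inv in Hsat. sat_cases (s i) (z i) Hs0; lra. }
      pose proof (mean_zero_lower_bound z c d Hz Hd Hhi k Hk). specialize (Hhi k Hk).
      apply Rabs_le; lra.
    + rewrite (sat_upper (s m) (z m)) in Hsat by lra.
      assert (Hlo : forall i, (i < N)%nat -> - d <= z i - c).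
      { intros i Hi. specialize (Hsat i Hi). pose proof (Hds i Hi). pose proof (s_pos i Hi) as Hs0.
        apply Rabs_le_inv in Hsat. sat_cases (s i) (z i) Hs0; lra. }
      pose proof (mean_zero_upper_bound z c d Hz Hd Hlo k Hk). specialize (Hlo k Hk).
      apply Rabs_le; lra.
  - assert (Hid : forall i, (i < N)%nat -> sat (s i) (z i) = z i).
    { intros i Hi. apply sat_id. apply Rabs_le_inv. apply Rnot_lt_le. intro. apply Hno; eauto. }
    assert (E : z k - c = fsum N (fun j => p j * (z k - z j))).
    { rewrite fsum_centered in Hz by auto.
      rewrite (fsum_ext _ _ (fun j => p j * z k - p j * z j)) by (intros; ring).
      rewrite fsum_minus, fsum_mult_r, p_sum1. lra. }
    rewrite E. eapply Rle_trans; [|apply Hdd].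
    apply fsum_weighted_abs_le; auto.
    + intros i Hi. specialize (p_ge_pm i Hi). lra.
    + intros j Hj. rewrite <- (Hid k), <- (Hid j) by auto. apply Hy; auto.
Qed.

End Averaging.

(** * The saturated consensus dynamics *)

Definition satv (s z : nat -> R) j := sat (s j) (z j).

(* When all outputs at the constant state [C] agree, [flow (satv s u)] only involves the
   increments [sat (s j) (u j) - sat (s j) C], which are bounded by [|u j - C|]. *)
Lemma flow_sat_abs_le N alpha s C A u i :
  (forall i j, (i < N)%nat -> (j < N)%nat -> 0 <= alpha i j <= A) ->
  (forall i, (i < N)%nat -> 0 < s i) ->
  (forall i j, (i < N)%nat -> (j < N)%nat -> sat (s i) C = sat (s j) C) -> (i < N)%nat ->
  Rabs (flow N alpha (satv s u) i) <= A * fsum N (fun j => Rabs (u j - C) + Rabs (u i - C)).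
Proof.
  intros Ha Hs Heq Hi. unfold flow. eapply Rle_trans; [apply fsum_abs|].
  rewrite <- fsum_mult_l. apply fsum_le. intros j Hj.
  destruct (Ha i j Hi Hj) as [Ha0 HaA].
  rewrite Rabs_mult, (Rabs_right (alpha i j)) by lra.
  apply Rmult_le_compat; [lra|apply Rabs_pos|lra|].
  unfold satv.
  replace (sat (s j) (u j) - sat (s i) (u i))
    with ((sat (s j) (u j) - sat (s j) C) - (sat (s i) (u i) - sat (s i) C))
    by (rewrite (Heq i j) by auto; ring).
  eapply Rle_trans; [apply Rabs_triang|]. rewrite Rabs_Ropp.
  pose proof (sat_lipschitz (s j) (u j) C (Hs j Hj)).
  pose proof (sat_lipschitz (s i) (u i) C (Hs i Hi)). lra.
Qed.

(* Row by row, [2 |e_i| (|e_j| + |e_i|) <= 3 e_i^2 + e_j^2] with [e = u - C]. *)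
Lemma flow_sat_deviation_bound N alpha s C A u :
  (forall i j, (i < N)%nat -> (j < N)%nat -> 0 <= alpha i j <= A) ->
  (forall i, (i < N)%nat -> 0 < s i) ->
  (forall i j, (i < N)%nat -> (j < N)%nat -> sat (s i) C = sat (s j) C) ->
  - (4 * INR N * A * fsum N (fun i => (u i - C) * (u i - C)))
  <= fsum N (fun i => 2 * (u i - C) * flow N alpha (satv s u) i).
Proof.
  intros Ha Hs Heq.
  set (e := fun i => Rabs (u i - C)).
  set (G := fsum N (fun i => (u i - C) * (u i - C))).
  assert (He : forall i, 0 <= e i /\ e i * e i = (u i - C) * (u i - C)).
  { intros i. unfold e. split; [apply Rabs_pos|].
    rewrite <- Rabs_mult. apply Rabs_right, Rle_ge, Rle_0_sqr. }
  assert (Hrow : forall i, (i < N)%nat ->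
            - (A * (3 * INR N * ((u i - C) * (u i - C)) + G))
            <= 2 * (u i - C) * flow N alpha (satv s u) i).
  { intros i Hi. destruct (Ha i i Hi Hi) as [Haii HA]. destruct (He i) as [Hi0 Hi2].
    assert (Hprod : Rabs (2 * (u i - C) * flow N alpha (satv s u) i)
                    <= A * fsum N (fun j => 2 * e i * (e j + e i))).
    { rewrite !Rabs_mult, (Rabs_right 2), fsum_mult_l by lra. fold (e i).
      pose proof (flow_sat_abs_le N alpha s C A u i Ha Hs Heq Hi) as Hflow.
      change (Rabs (flow N alpha (satv s u) i) <= A * fsum N (fun j => e j + e i)) in Hflow.
      nra. }
    assert (Hamgm : A * fsum N (fun j => 2 * e i * (e j + e i))
                    <= A * (3 * INR N * ((u i - C) * (u i - C)) + G)).
    { apply Rmult_le_compat_l; [lra|].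
      replace (3 * INR N * ((u i - C) * (u i - C))) with (INR N * (3 * ((u i - C) * (u i - C))))
        by ring.
      unfold G. rewrite <- fsum_const, <- fsum_plus. apply fsum_le. intros j Hj.
      destruct (He j) as [Hj0 Hj2]. pose proof (Rle_0_sqr (e i - e j)). unfold Rsqr in *. nra. }
    pose proof (Rabs_le_inv _ _ Hprod). lra. }
  eapply Rle_trans; [|apply (fsum_le _ _ _ Hrow)].
  rewrite (fsum_ext _ _ (fun i => -1 * (A * (3 * INR N) * ((u i - C) * (u i - C)) + A * G)))
    by (intros; ring).
  rewrite fsum_mult_l, fsum_plus, fsum_mult_l, fsum_const. fold G. lra.
Qed.

Section Dynamics.

Variables (N : nat) (alpha : nat -> nat -> R) (s p : nat -> R) (t0 : R) (x : nat -> R -> R).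
Hypotheses (alpha_ge0 : forall i j, (i < N)%nat -> (j < N)%nat -> 0 <= alpha i j)
  (graph_sc : strongly_connected N alpha) (s_pos : forall i, (i < N)%nat -> 0 < s i)
  (p_left_null : left_null N alpha p) (p_sum1 : fsum N p = 1)
  (x_sol : is_solution N alpha s t0 x).

Definition state t j := x j t.

Definition average t := fsum N (fun i => p i * x i t).

Definition storage t := fsum N (fun i => p i * sat_prim (s i) (x i t)).

Lemma p_pos i : (i < N)%nat -> 0 < p i.
Proof. apply (left_null_pos N alpha alpha_ge0 p); auto. Qed.

Lemma p_lower_bound : exists pm, 0 < pm <= 1 /\ forall i, (i < N)%nat -> pm <= p i.
Proof.
  destruct (fin_pos_lower_bound N p) as [pm [Hpm Hpmp]].
  exists (Rmin pm 1). split; [split; [apply Rmin_glb_lt; lra|apply Rmin_r]|].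
  intros i Hi. eapply Rle_trans; [apply Rmin_l|apply Hpmp, p_pos; auto].
Qed.

Lemma state_deriv i t :
  (i < N)%nat -> t0 <= t -> derivable_pt_lim (x i) t (flow N alpha (satv s (state t)) i).
Proof. apply x_sol. Qed.

Lemma average_const t : t0 <= t -> average t = average t0.
Proof.
  intros Ht. apply (zero_derivative_constant average
    (fun u => fsum N (fun i => p i * flow N alpha (satv s (state u)) i))); auto.
  - intros u Hu. apply (derivable_pt_lim_fsum N (fun i u => p i * x i u)).
    intros i Hi. apply derivable_pt_lim_scal, state_deriv; [auto|lra].
  - intros u _. apply (left_null_flow_sum N alpha p); auto.
Qed.

Lemma storage_deriv t :
  t0 <= t -> derivable_pt_lim storage t (- / 2 * dissipation N alpha p (satv s (state t))).
Proof.
  intros Ht. rewrite <- (left_null_flow_energy N alpha p) by auto.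
  apply (derivable_pt_lim_fsum N (fun i u => p i * sat_prim (s i) (x i u))). intros i Hi.
  apply derivable_pt_lim_scal.
  apply (derivable_pt_lim_comp (x i) (sat_prim (s i))).
  - apply state_deriv; auto.
  - apply sat_prim_deriv; auto.
Qed.

Lemma storage_decreasing a b : t0 <= a -> a <= b -> storage b <= storage a.
Proof.
  intros Ha Hab.
  apply (nonpos_derivative_decreasing _
           (fun t => - / 2 * dissipation N alpha p (satv s (state t)))); auto.
  - intros c Hc. apply storage_deriv. lra.
  - intros c _.
    assert (0 <= dissipation N alpha p (satv s (state c))); [|lra].
    apply dissipation_nonneg; auto. intros; left; apply p_pos; auto.
Qed.

(* The storage function is nonnegative and dissipates at rate [dissipation / 2], so the
   dissipation cannot stay above [w] over a time span longer than [2 storage t0 / w]. *)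
Lemma small_dissipation_time w :
  0 < w -> exists t, t0 <= t /\ dissipation N alpha p (satv s (state t)) < w.
Proof.
  intros Hw.
  assert (HV : forall t, 0 <= storage t).
  { intros t. apply fsum_nonneg. intros i Hi.
    apply Rmult_le_pos; [left; apply p_pos|apply sat_prim_nonneg]; auto. }
  set (L := 2 * storage t0 / w + 1).
  assert (HL : w * L = 2 * storage t0 + w) by (unfold L; field; lra).
  assert (HL0 : 0 < L) by (pose proof (HV t0); apply (Rmult_lt_reg_l w); lra).
  destruct (MVT_cor2 storage (fun t => - / 2 * dissipation N alpha p (satv s (state t)))
              t0 (t0 + L))
    as [t [Ht1 Ht2]]; [lra|intros; apply storage_deriv; lra|].
  exists t. split; [lra|]. replace (t0 + L - t0) with L in Ht1 by ring.
  apply (Rmult_lt_reg_r L); auto. pose proof (HV (t0 + L)). lra.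
Qed.

Section Unsaturated.

Hypothesis average_unsat : forall i, (i < N)%nat -> Rabs (average t0) <= s i.

Definition divergence t := fsum N (fun i => p i * bregman (s i) (average t0) (x i t)).

Lemma average_deviation_zero t :
  t0 <= t -> fsum N (fun i => p i * (x i t - average t0)) = 0.
Proof.
  intros Ht. rewrite fsum_centered by auto. fold (average t). rewrite average_const; auto; ring.
Qed.

Lemma divergence_decreasing a b : t0 <= a -> a <= b -> divergence b <= divergence a.
Proof.
  intros Ha Hab.
  assert (Hdiv : forall t, t0 <= t -> divergence t = storage t - average t0 * average t0 / 2).
  { intros t Ht. unfold divergence, storage, bregman. set (c := average t0).
    rewrite (fsum_ext _ _ (fun i => p i * sat_prim (s i) (x i t)
                                    - (c * c / 2 * p i + c * (p i * (x i t - c))))).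
    - rewrite fsum_minus, fsum_plus, !fsum_mult_l, average_deviation_zero, p_sum1 by auto. ring.
    - intros i Hi. unfold sat_prim at 2.
      rewrite (sat_id (s i) c) by (apply Rabs_le_inv, average_unsat, Hi). field. }
  rewrite !Hdiv by lra. pose proof (storage_decreasing a b Ha Hab). lra.
Qed.

Lemma states_near_average_sometime eta :
  0 < eta -> exists t, t0 <= t /\ forall k, (k < N)%nat -> Rabs (x k t - average t0) <= eta.
Proof.
  intros Heta.
  destruct p_lower_bound as [pm [[Hpm Hpm1] Hpmp]].
  destruct (fin_pos_lower_bound N s) as [sm [Hsm Hsmp]].
  set (d := Rmin (sm / 2) (eta * pm / 2)).
  assert (Hd : 0 < d) by (apply Rmin_glb_lt; nra).
  assert (Hd1 : d <= sm / 2) by apply Rmin_l. assert (Hd2 : d <= eta * pm / 2) by apply Rmin_r.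
  destruct (small_dissipation_spread N alpha alpha_ge0 p d graph_sc p_pos Hd) as [w [Hw Hspread]].
  destruct (small_dissipation_time w Hw) as [t [Ht Hdis]].
  exists t. split; auto. intros k Hk. eapply Rle_trans.
  - apply (outputs_close_states_close N p pm Hpm Hpm1 Hpmp p_sum1 s (average t0) s_pos
             average_unsat (state t) d); auto; try lra.
    + apply average_deviation_zero; auto.
    + intros j Hj. specialize (Hsmp j Hj (s_pos j Hj)). lra.
    + intros a b Ha Hb. apply (Hspread _ Hdis a b Ha Hb).
  - apply (Rmult_le_reg_l pm); auto. unfold Rdiv. field_simplify; nra.
Qed.

Lemma consensus_of_unsaturated_average : consensus N x.
Proof.
  destruct p_lower_bound as [pm [[Hpm Hpm1] Hpmp]].
  exists (average t0). intros i Hi eps Heps.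
  destruct (bregman_coercive N p pm Hpm Hpm1 Hpmp p_sum1 s (average t0) s_pos average_unsat
              eps Heps) as [zeta [Hzeta Hcoer]].
  set (eta := Rmin 1 zeta).
  assert (Heta : 0 < eta) by (apply Rmin_glb_lt; lra).
  assert (Heta1 : eta <= 1) by apply Rmin_l. assert (Heta2 : eta <= zeta) by apply Rmin_r.
  destruct (states_near_average_sometime eta Heta) as [t1 [Ht1 Hclose]].
  assert (Hdiv1 : divergence t1 <= zeta).
  { unfold divergence. apply (Rle_trans _ eta); auto. apply fsum_weighted_le; auto.
    - intros j Hj. left; apply p_pos; auto.
    - intros j Hj.
      pose proof (bregman_bounds (s j) (average t0) (x j t1) (s_pos j Hj) (average_unsat j Hj)).
      pose proof (Rabs_le_inv _ _ (Hclose j Hj)).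
      assert ((x j t1 - average t0) * (x j t1 - average t0) <= eta * eta) by nra. nra. }
  exists t1. intros t Ht.
  apply (Hcoer (state t)); auto.
  - apply average_deviation_zero. lra.
  - pose proof (divergence_decreasing t1 t Ht1 ltac:(lra)). unfold divergence, state in *. lra.
Qed.

End Unsaturated.

Section Consensus.

Variable C : R.
Hypothesis x_conv :
  forall i, (i < N)%nat -> forall eps, eps > 0 ->
    exists T, forall t, t >= T -> Rabs (x i t - C) < eps.

Lemma x_conv_uniform eps :
  0 < eps -> exists T, t0 <= T /\
    forall i, (i < N)%nat -> forall t, t >= T -> Rabs (x i t - C) < eps.
Proof.
  intros Heps.
  destruct (eventually_forall_lt N (fun i t => Rabs (x i t - C) < eps)) as [T HT].
  { intros i Hi. apply x_conv; auto; lra. }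
  exists (Rmax T t0). split; [apply Rmax_r|].
  intros i Hi t Ht. apply HT; auto. pose proof (Rmax_l T t0). lra.
Qed.

Lemma consensus_value_average : C = average t0.
Proof.
  destruct (Req_dec C (average t0)) as [|Hne]; auto. exfalso.
  assert (He : 0 < Rabs (average t0 - C) / 2)
    by (pose proof (Rabs_pos_lt (average t0 - C) ltac:(lra)); lra).
  destruct (x_conv_uniform _ He) as [T [HT0 HT]].
  assert (Rabs (average t0 - C) <= Rabs (average t0 - C) / 2); [|lra].
  rewrite <- (average_const T) at 1 by auto. unfold average at 1. rewrite <- fsum_centered by auto.
  apply fsum_weighted_abs_le; auto.
  - intros j Hj. left; apply p_pos; auto.
  - intros j Hj. left. apply HT; auto; lra.
Qed.

Lemma consensus_equilibrium i : (i < N)%nat -> flow N alpha (satv s (fun _ => C)) i = 0.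
Proof.
  intros Hi.
  apply (derivative_limit_of_convergent (x i) (fun t => flow N alpha (satv s (state t)) i) t0 C).
  - intros t Ht. apply state_deriv; auto.
  - intros eps Heps. apply x_conv; auto; lra.
  - intros eps Heps. pose proof (out_degree_nonneg N alpha alpha_ge0 i Hi).
    set (rho := eps / (2 * (out_degree N alpha i + 1))).
    assert (Hrho : 0 < rho) by (apply Rdiv_lt_0_compat; lra).
    destruct (x_conv_uniform rho Hrho) as [T [_ HT]]. exists T. intros t Ht.
    eapply Rle_trans; [apply (flow_lipschitz N alpha alpha_ge0 _ _ rho); auto|].
    + intros j Hj. unfold satv, state. eapply Rle_trans; [apply sat_lipschitz; auto|].
      left; apply HT; auto.
    + unfold rho. apply (Rmult_le_reg_r (2 * (out_degree N alpha i + 1))); [lra|].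
      field_simplify; nra.
Qed.

Lemma consensus_outputs_equal i j :
  (i < N)%nat -> (j < N)%nat -> sat (s i) C = sat (s j) C.
Proof.
  apply (flow_zero_const N alpha alpha_ge0 (satv s (fun _ => C)) graph_sc consensus_equilibrium).
Qed.

(* Once every state is close enough to a saturated [C], all outputs equal the common value
   [sat (s j) C], the flows vanish and the states stop moving; they must then sit at [C]. *)
Lemma frozen_after_saturation i0 :
  (i0 < N)%nat -> sat (s i0) C <> C -> exists T, t0 <= T /\ forall j, (j < N)%nat -> x j T = C.
Proof.
  intros Hi0 Hsat.
  assert (He : 0 < Rabs (C - sat (s i0) C)) by (apply Rabs_pos_lt; lra).
  destruct (x_conv_uniform _ He) as [T [HT0 HT]]. exists T. split; auto.
  assert (Hout : forall j t, (j < N)%nat -> t >= T -> sat (s j) (x j t) = sat (s j) C).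
  { intros j t Hj Ht. rewrite (consensus_outputs_equal j i0) by auto.
    rewrite <- (consensus_outputs_equal j i0) at 1 by auto.
    apply sat_locally_const; auto; rewrite (consensus_outputs_equal j i0); auto. }
  intros j Hj.
  assert (Hconst : forall t, t >= T -> x j t = x j T).
  { intros t Ht.
    apply (zero_derivative_constant (x j) (fun u => flow N alpha (satv s (state u)) j));
      [lra|intros; apply state_deriv; auto; lra|].
    intros u Hu. unfold flow, satv, state. rewrite <- (fsum_zero N). apply fsum_ext.
    intros k Hk.
    rewrite (Hout k u), (Hout j u), (consensus_outputs_equal k j) by (auto; lra). ring. }
  destruct (Req_dec (x j T) C) as [|Hne]; auto. exfalso.
  assert (He' : 0 < Rabs (x j T - C)) by (apply Rabs_pos_lt; lra).
  destruct (x_conv_uniform _ He') as [T' [_ HT']].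
  specialize (HT' j Hj (Rmax T T') (Rle_ge _ _ (Rmax_r T T'))).
  rewrite Hconst in HT' by (apply Rle_ge, Rmax_l). lra.
Qed.

Lemma backward_uniqueness T :
  t0 <= T -> (forall j, (j < N)%nat -> x j T = C) -> forall j, (j < N)%nat -> x j t0 = C.
Proof.
  intros HT HxT.
  set (A := fsum N (fun i => fsum N (fun j => alpha i j))).
  assert (HA : forall i j, (i < N)%nat -> (j < N)%nat -> 0 <= alpha i j <= A).
  { intros i j Hi Hj. split; auto. unfold A.
    apply (Rle_trans _ (fsum N (fun l => alpha i l))).
    - apply (fsum_ge_term _ (fun l => alpha i l)); auto.
    - apply (fsum_ge_term _ (fun i => fsum N (fun l => alpha i l))); auto.
      intros; apply out_degree_nonneg; auto. }
  set (g := fun t => fsum N (fun i => (x i t - C) * (x i t - C))).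
  assert (Hg0 : g t0 = 0).
  { apply (gronwall_backward g
      (fun t => fsum N (fun i => 2 * (x i t - C) * flow N alpha (satv s (state t)) i))
      (4 * INR N * A) t0 T); auto.
    - intros t Ht. apply (derivable_pt_lim_fsum N (fun i u => (x i u - C) * (x i u - C))).
      intros i Hi. apply derivable_pt_lim_sqr_dev, state_deriv; auto; lra.
    - intros t Ht. 
      apply (flow_sat_deviation_bound N alpha s C A (state t)); auto.
      apply consensus_outputs_equal.
    - apply fsum_nonneg. intros; apply Rle_0_sqr.
    - unfold g. rewrite <- (fsum_zero N). apply fsum_ext. intros j Hj. rewrite HxT; auto; ring. }
  intros j Hj.
  assert ((x j t0 - C) * (x j t0 - C) = 0) as Hj0.
  { apply (fsum_nonneg_eq0 N (fun i => (x i t0 - C) * (x i t0 - C))); auto.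
    intros; apply Rle_0_sqr. }
  destruct (Rmult_integral _ _ Hj0); lra.
Qed.

Lemma consensus_unsaturated :
  (exists i j, (i < N)%nat /\ (j < N)%nat /\ x i t0 <> x j t0) ->
  forall i, (i < N)%nat -> Rabs C <= s i.
Proof.
  intros [a [b [Ha [Hb Hab]]]] i Hi.
  destruct (Rle_dec (Rabs C) (s i)) as [|Hsat]; auto. exfalso.
  assert (sat (s i) C <> C) as Hne.
  { intros Heq. pose proof (Rabs_sat_le (s i) C (s_pos i Hi)). rewrite Heq in *. lra. }
  destruct (frozen_after_saturation i Hi Hne) as [T [HT HxT]].
  apply Hab. rewrite !(backward_uniqueness T); auto.
Qed.

End Consensus.

End Dynamics.

Theorem theorem5 (N : nat) (alpha : nat -> nat -> R) (s : nat -> R)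
    (p : nat -> R) (t0 : R) (x : nat -> R -> R) :
  (forall i j, (i < N)%nat -> (j < N)%nat -> 0 <= alpha i j) ->
  strongly_connected N alpha ->
  (forall i, (i < N)%nat -> 0 < s i) ->
  left_null N alpha p ->
  fsum N p = 1 ->
  is_solution N alpha s t0 x ->
  (exists i j, (i < N)%nat /\ (j < N)%nat /\ x i t0 <> x j t0) ->
  (consensus N x <->
   forall i, (i < N)%nat -> Rabs (fsum N (fun k => p k * x k t0)) <= s i).
Proof.
  intros Ha Hsc Hs Hl Hp1 Hsol Hne. split.
  - intros [C HC] i Hi.
    change (fsum N (fun k => p k * x k t0)) with (average N p x t0).
    rewrite <- (consensus_value_average N alpha s p t0 x Ha Hsc Hl Hp1 Hsol C HC).
    exact (consensus_unsaturated N alpha s t0 x Ha Hsc Hs Hsol C HC Hne i Hi).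
  - exact (consensus_of_unsaturated_average N alpha s p t0 x Ha Hsc Hs Hl Hp1 Hsol).
Qed.
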